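(* Let $\alpha\in\mathbb C$. For every integer $n\ge1$, $$A_\alpha^n=\sum_{i=0}^{\lfloor (n-1)/2\rfloor}\binom{n}{i}P_{n-2i,\alpha}+\varphi_n I,$$ where $\varphi_n=0$ if $n$ is odd and $\varphi_n=\binom{n}{n/2}$ if $n$ is even. All matrices are semi-infinite with rows and columns indexed by the positive integers; $I$ is the semi-infinite identity and $e_1$ its first column. $T(a)$ denotes the Toeplitz matrix with $(i,j)$ entry $a_{j-i}$ for $a(z)=\sum_{i\in\mathbb Z}a_iz^i$. For a vector/power series $v(z)=\sum_{i\ge1}v_iz^i$, $H(v)$ denotes the semi-infinite Hankel matrix with $(i,j)$ entry $v_{i+j-1}$ (its first column is $(v_1,v_2,\ldots)^T$). $A_\alpha:=T(z+z^{-1})+\alpha e_1e_1^T$ (tridiagonal, ones on sub- and superdiagonal, $(1,1)$ entry $\alpha$). Let $\theta=\alpha^2-1$, $h_1(z)=\alpha z$, and $h_n(z)=\theta\sum_{i=1}^{n-1}\alpha^{n-i-1}z^i+\alpha z^n$ for $n\ge2$. Define $H_{n,\alpha}=H(h_n)$, $P_{0,\alpha}=I$ and $P_{n,\alpha}=T(z^n+z^{-n})+H_{n,\alpha}$ for $n\ge1$ (so $P_{1,\alpha}=A_\alpha$). *)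

From HB Require Import structures.
From mathcomp Require Import all_boot all_order all_algebra.
From mathcomp.real_closed Require Import complex.
From mathcomp Require Import Rstruct.
From Stdlib Require Reals.
Set Implicit Arguments. Unset Strict Implicit. Unset Printing Implicit Defensive.
Import Order.TTheory GRing.Theory Num.Theory.
Local Open Scope ring_scope.

Notation C := (Rdefinitions.R[i]) (only parsing).

(* Semi-infinite matrices, rows/columns indexed by positive integers
   i, j >= 1 (entries at index 0 are irrelevant and never used). *)
Definition smat := nat -> nat -> C.

Definition idm : smat := fun i j => if i == j then 1 else 0.

Definition toeplitz (a : int -> C) : smat := fun i j => a (j%:Z - i%:Z).

Definition hankel (v : nat -> C) : smat := fun i j => v (i + j).-1.

Definition zpm (n : nat) : int -> C :=
  fun k => (if k == n%:Z then 1 else 0) + (if k == - n%:Z then 1 else 0).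

Definition Aal (alpha : C) : smat :=
  fun i j => toeplitz (zpm 1) i j + (if (i == 1%N) && (j == 1%N) then alpha else 0).

Definition theta (alpha : C) : C := alpha ^+ 2 - 1.

(* Coefficients of h_n(z) = theta * sum_{i=1}^{n-1} alpha^{n-i-1} z^i + alpha z^n
   (for n = 1 the sum is empty, giving h_1 = alpha z). *)
Definition hcoef (alpha : C) (n : nat) : nat -> C :=
  fun k => (if (1 <= k < n)%N then theta alpha * alpha ^+ (n - k - 1) else 0)
           + (if k == n then alpha else 0).

Definition Hn (alpha : C) (n : nat) : smat := hankel (hcoef alpha n).

Definition Pn (alpha : C) (n : nat) : smat :=
  if n == 0%N then idm else fun i j => toeplitz (zpm n) i j + Hn alpha n i j.

(* Powers of A_alpha: A^0 = I, A^{n+1} = A * A^n.  The matrix product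
   (A * B)_{ij} = sum_{k>=1} A_{ik} B_{kj} is a finite sum since row i of
   A_alpha vanishes beyond column i+1. *)
Fixpoint Apow (alpha : C) (n : nat) : smat :=
  match n with
  | 0 => idm
  | m.+1 => fun i j => \sum_(1 <= k < i.+2) Aal alpha i k * Apow alpha m k j
  end.

Definition phin (n : nat) : C := if odd n then 0 else ('C(n, n./2))%:R.

From HB Require Import structures.
From mathcomp Require Import all_boot all_order all_algebra.
From mathcomp.real_closed Require Import complex.
From mathcomp Require Import Rstruct.
From mathcomp Require Import zify ring.
Import GRing.Theory Num.Theory.
Local Open Scope ring_scope.

(* Set P~_m := T(z^m + z^-m) + H(h_m) for all m >= 0, so that P~_m = P_{m,alpha} for
   m >= 1 but P~_0 = 2 I.  These matrices obey the Chebyshev-type recurrence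
   A_alpha P~_m = P~_{m+1} + P~_{|m-1|}, the matrix form of
   (z + z^-1)(z^m + z^-m) = (z^(m+1) + z^-(m+1)) + (z^(m-1) + z^-(m-1)).  For the
   Hankel part this holds because h_{m+1} is h_m shifted by one, except in the first
   row, where theta = alpha^2 - 1 makes it work.  Induction on n and Pascal's rule
   then give 2 A_alpha^n = sum_{l=0}^n C(n,l) P~_{|n-2l|}, the analogue of the
   binomial expansion of (z + z^-1)^n.  The terms l and n - l coincide, so the sum
   folds onto l <= (n-1)/2; for even n the middle term C(n,n/2) P~_0 is 2 phi_n I. *)

Ltac case_ifs := repeat (case: ifPn => ?; try (exfalso; lia)).

Lemma sum_binom_pascal (R : comNzRingType) (G : nat -> R) n :
  \sum_(0 <= l < n.+1) 'C(n, l)%:R * (G l + G l.+1) =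
  \sum_(0 <= l < n.+2) 'C(n.+1, l)%:R * G l.
Proof.
under eq_bigr do rewrite mulrDr.
rewrite [RHS]big_nat_recl // big_split /=.
under [in RHS]eq_bigr => l _ do rewrite binS natrD mulrDl.
rewrite big_split /= addrA; congr (_ + _).
rewrite big_nat_recl // [in RHS]big_nat_recr //=.
by rewrite (bin_small (ltnSn n)) mul0r addr0 !bin0.
Qed.

Lemma sum_nat_sym_fold (R : zmodType) (f : nat -> R) n : (0 < n)%N ->
  (forall l, (l <= n)%N -> f (n - l)%N = f l) ->
  \sum_(0 <= l < n.+1) f l =
    (\sum_(0 <= l < ((n.-1)./2).+1) f l) *+ 2 + (if odd n then 0 else f n./2).
Proof.
move=> n_gt0 f_sym; set q := (n.-1)./2.
have n_eq := odd_double_half n.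
have q_le : (q.+1 <= n.+1)%N by rewrite /q; lia.
rewrite (big_cat_nat (n := q.+1)) //= mulr2n -addrA; congr (_ + _).
have -> : \sum_(q.+1 <= l < n.+1) f l = \sum_(0 <= l < n - q) f l.
  rewrite -{1}[q.+1]add0n big_addn big_nat_rev.
  have -> : (n.+1 - q.+1 = n - q)%N by lia.
  apply: eq_big_nat => l /andP[_ hl]; rewrite -f_sym; last by lia.
  congr f; lia.
case: (boolP (odd n)) n_eq => [n_odd | /negbTE n_even];
  rewrite ?n_odd ?n_even /= => n_eq.
  have -> : (n - q = q.+1)%N by rewrite /q -n_eq; lia.
  by rewrite addr0.
have half_eq : n./2 = q.+1 by rewrite /q -n_eq; lia.
have -> : (n - q = q.+2)%N by lia.
by rewrite big_nat_recr //= half_eq.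
Qed.

Definition Amul (alpha : C) (X : smat) : smat :=
  fun i j => \sum_(1 <= k < i.+2) Aal alpha i k * X k j.

Lemma AmulE alpha X i j : (0 < i)%N ->
  Amul alpha X i j = (if i == 1%N then alpha * X 1%N j else X i.-1 j) + X i.+1 j.
Proof.
case: i => [//|[|i]] _; rewrite /Amul.
  by rewrite big_nat_recr //= big_nat1 /Aal /toeplitz /zpm /=; case_ifs; ring.
rewrite big_nat_recr //= big_nat_recr //= big_nat_recr //= big1_seq; last first.
  move=> k /andP[_]; rewrite mem_index_iota => /andP[_ k_lt].
  by rewrite /Aal /toeplitz /zpm /=; case_ifs; ring.
by rewrite /Aal /toeplitz /zpm /=; case_ifs; ring.
Qed.

Lemma Amul_sum alpha (I : Type) (r : seq I) (X : I -> smat) i j :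
  Amul alpha (fun k j => \sum_(l <- r) X l k j) i j =
  \sum_(l <- r) Amul alpha (X l) i j.
Proof. by rewrite /Amul; under eq_bigr do rewrite mulr_sumr; rewrite exchange_big. Qed.

Lemma AmulZ alpha c X i j : Amul alpha (fun k j => c * X k j) i j = c * Amul alpha X i j.
Proof. by rewrite /Amul mulr_sumr; apply: eq_bigr => k _; rewrite mulrCA. Qed.

Lemma eq_Amul alpha X Y i j : (forall k, (0 < k)%N -> X k j = Y k j) ->
  Amul alpha X i j = Amul alpha Y i j.
Proof. by move=> XY; apply: eq_big_nat => k /andP[k_gt0 _]; rewrite XY. Qed.

Definition Ptilde (alpha : C) (m : nat) : smat :=
  fun i j => toeplitz (zpm m) i j + hankel (hcoef alpha m) i j.

Lemma Pn_Ptilde alpha m : (0 < m)%N -> Pn alpha m = Ptilde alpha m.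
Proof. by rewrite /Pn; case: m. Qed.

Lemma Ptilde0 alpha i j : (0 < i)%N -> (0 < j)%N -> Ptilde alpha 0 i j = 2 * idm i j.
Proof.
move=> i_gt0 j_gt0.
by rewrite /Ptilde /toeplitz /hankel /zpm /hcoef /idm /=; case_ifs; ring.
Qed.

Lemma zpm_step m d : (0 < m)%N ->
  zpm m (d + 1) + zpm m (d - 1) = zpm m.+1 d + zpm m.-1 d.
Proof. by move=> m_gt0; rewrite /zpm; case_ifs; ring. Qed.

Lemma toeplitz_step m i j : (0 < m)%N -> (1 < i)%N ->
  toeplitz (zpm m) i.-1 j + toeplitz (zpm m) i.+1 j =
  toeplitz (zpm m.+1) i j + toeplitz (zpm m.-1) i j.
Proof.
move=> m_gt0 i_gt1; rewrite /toeplitz -zpm_step //.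
by congr (zpm m _ + zpm m _); lia.
Qed.

Lemma hcoef_shift alpha m k : (0 < k)%N -> hcoef alpha m.+1 k.+1 = hcoef alpha m k.
Proof. by move=> k_gt0; rewrite /hcoef ltnS k_gt0 subSS eqSS. Qed.

Lemma hankel_step alpha m i j : (0 < m)%N -> (1 < i)%N -> (0 < j)%N ->
  hankel (hcoef alpha m) i.-1 j + hankel (hcoef alpha m) i.+1 j =
  hankel (hcoef alpha m.+1) i j + hankel (hcoef alpha m.-1) i j.
Proof.
case: m i => [|m] [|[|i]] // _ _ j_gt0; rewrite /hankel /=.
by rewrite !addSn !hcoef_shift ?addn_gt0 ?j_gt0 ?orbT // addrC.
Qed.

Lemma hcoef_row1 alpha m j : (0 < j)%N ->
  alpha * hcoef alpha m j + (if j == m.+1 then alpha else 0) =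
  (if j == m then 1 else 0) + hcoef alpha m.+1 j.
Proof.
move=> j_gt0; rewrite /hcoef /theta; case_ifs; try ring.
  by rewrite (_ : m.+1 - j - 1 = (m - j - 1).+1)%N ?exprS; [ring | lia].
by rewrite (_ : m.+1 - j - 1 = 0)%N; [ring | lia].
Qed.

Lemma Ptilde_row1 alpha m j : (0 < m)%N -> (0 < j)%N ->
  alpha * Ptilde alpha m 1 j + Ptilde alpha m 2 j =
  Ptilde alpha m.+1 1 j + Ptilde alpha m.-1 1 j.
Proof.
case: m => [//|m] _ j_gt0; have row1 := hcoef_row1 alpha m.+1 j j_gt0.
rewrite /Ptilde /hankel /= hcoef_shift // add0n.
have -> : hcoef alpha m.+2 j =
    alpha * hcoef alpha m.+1 j + (if j == m.+2 then alpha else 0)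
    - (if j == m.+1 then 1 else 0).
  by rewrite row1 [_ + hcoef _ _ _]addrC addrK.
by rewrite /toeplitz /zpm /=; case_ifs; ring.
Qed.

Lemma Amul_Ptilde alpha m i j : (0 < m)%N -> (0 < i)%N -> (0 < j)%N ->
  Amul alpha (Ptilde alpha m) i j = Ptilde alpha m.+1 i j + Ptilde alpha m.-1 i j.
Proof.
move=> m_gt0 i_gt0 j_gt0; rewrite AmulE //.
case: i i_gt0 => [|[|i]] // _; first exact: Ptilde_row1.
by rewrite /Ptilde addrACA toeplitz_step // hankel_step // addrACA.
Qed.

Lemma Amul_Ptilde0 alpha i j : (0 < i)%N -> (0 < j)%N ->
  Amul alpha (Ptilde alpha 0) i j = 2 * Ptilde alpha 1 i j.
Proof.
move=> i_gt0 j_gt0; rewrite AmulE //.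
case: i i_gt0 => [|[|i]] // _;
  by rewrite /Ptilde /toeplitz /hankel /zpm /hcoef /=; case_ifs; ring.
Qed.

Lemma Amul_Ptilde_absz alpha (m : int) i j : (0 < i)%N -> (0 < j)%N ->
  Amul alpha (Ptilde alpha `|m|) i j =
  Ptilde alpha `|m + 1| i j + Ptilde alpha `|m - 1| i j.
Proof.
move=> i_gt0 j_gt0; case: m => [[|m]|m].
- by rewrite Amul_Ptilde0 // mulr_natl mulr2n.
- by rewrite Amul_Ptilde //; congr (Ptilde alpha _ i j + Ptilde alpha _ i j); lia.
- rewrite Amul_Ptilde // [RHS]addrC.
  by congr (Ptilde alpha _ i j + Ptilde alpha _ i j); lia.
Qed.

Definition Pbinom (alpha : C) (n : nat) : smat :=
  fun i j => \sum_(0 <= l < n.+1) 'C(n, l)%:R * Ptilde alpha `|n%:Z - (2 * l)%:Z| i j.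

Lemma Amul_Pbinom alpha n i j : (0 < i)%N -> (0 < j)%N ->
  Amul alpha (Pbinom alpha n) i j = Pbinom alpha n.+1 i j.
Proof.
move=> i_gt0 j_gt0; rewrite /Pbinom Amul_sum.
rewrite -(sum_binom_pascal _ (fun l => Ptilde alpha `|n.+1%:Z - (2 * l)%:Z| i j)).
apply: eq_bigr => l _; rewrite AmulZ Amul_Ptilde_absz //.
by congr (_ * (Ptilde alpha _ i j + Ptilde alpha _ i j)); lia.
Qed.

Lemma Pbinom_Apow alpha n i j : (0 < i)%N -> (0 < j)%N ->
  Pbinom alpha n i j = 2 * Apow alpha n i j.
Proof.
elim: n i j => [|n IHn] i j i_gt0 j_gt0.
  by rewrite /Pbinom big_nat1 bin0 mul1r Ptilde0.
rewrite -Amul_Pbinom // (eq_Amul _ _ (fun k j => 2 * Apow alpha n k j)) ?AmulZ //.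
by move=> k k_gt0; rewrite IHn.
Qed.

Theorem corollary4 (alpha : C) (n : nat) : (1 <= n)%N ->
  forall i j : nat, (0 < i)%N -> (0 < j)%N ->
  Apow alpha n i j =
    \sum_(0 <= l < ((n.-1)./2).+1) ('C(n, l))%:R * Pn alpha (n - 2 * l) i j
    + phin n * idm i j.
Proof.
move=> n_gt0 i j i_gt0 j_gt0.
apply: (@mulfI _ 2); first by rewrite pnatr_eq0.
rewrite -Pbinom_Apow // /Pbinom.
set f := fun l => 'C(n, l)%:R * Ptilde alpha `|n%:Z - (2 * l)%:Z| i j.
rewrite (sum_nat_sym_fold _ f) // {}/f; last first.
  by move=> l l_le; rewrite bin_sub //; congr (_ * Ptilde alpha _ i j); lia.
rewrite [RHS]mulrDr -[_ *+ 2]mulr_natl; congr (_ * _ + _).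
  apply: eq_big_nat => l /andP[_ l_lt]; rewrite Pn_Ptilde; last by lia.
  by congr (_ * Ptilde alpha _ i j); lia.
rewrite /phin; case: ifP => [_|n_even]; first by rewrite mul0r mulr0.
have n_eq := odd_double_half n; rewrite n_even add0n in n_eq.
rewrite (_ : `|n%:Z - (2 * n./2)%:Z| = 0)%N ?Ptilde0 //; first by rewrite mulrCA.
by rewrite -{1}n_eq -muln2 mulnC; lia.
Qed.
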